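(* Let $V$ be a vector space over a field $\mathbb{F}$, let $u\in\mathrm{End}(V)$ and $a\in\mathbb{F}$. Assume that $V^u$ has a stratification satisfying properties (PA) and (PM). Then there exists an endomorphism $v$ of $V$ such that $v^2=av$ and $u-v$ is elementary.
   Context: For $u\in\mathrm{End}(V)$, $V^u$ is the $\mathbb{F}[t]$-module with underlying space $V$ and $t\cdot x:=u(x)$; $u$ is elementary if $V^u$ is a free $\mathbb{F}[t]$-module. A stratification of a non-zero $\mathbb{F}[t]$-module $M$ is an increasing family $(M_\alpha)_{\alpha\in D}$ of submodules indexed by a well-ordered set $D$ such that for each $\alpha\in D$ the quotient $M_\alpha/\sum_{\beta<\alpha}M_\beta$ is non-zero and monogenous (cyclic), and $M=\sum_{\alpha\in D}M_\alpha$. Its dimension sequence is $n_\alpha:=\dim_{\mathbb{F}}\bigl(M_\alpha/\sum_{\beta<\alpha}M_\beta\bigr)\in\mathbb{N}^*\cup\{+\infty\}$. Property (PA): $n_\alpha\ge 2$ whenever $\alpha$ is the successor (least strictly greater element) of some element of $D$. Property (PM): $D$ has no maximum. *)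

From HB Require Import structures.
From mathcomp Require Import all_boot all_order all_algebra.
Set Implicit Arguments. Unset Strict Implicit. Unset Printing Implicit Defensive.
Import Order.TTheory GRing.Theory Num.Theory.
Local Open Scope ring_scope.

Section Defs.
Variables (F : fieldType) (V : lmodType F).

(* p(u) x, i.e. the action t.x := u x of F[t] on V^u *)
Definition poly_act (u : V -> V) (p : {poly F}) (x : V) : V :=
  \sum_(i < size p) p`_i *: iter i u x.

(* V^u is a free F[t]-module: there is a basis (e_i)_{i in I} *)
Definition elementary (u : V -> V) : Prop :=
  exists (I : Type) (e : I -> V),
    (forall x : V, exists n (f : 'I_n -> I) (p : 'I_n -> {poly F}),
        x = \sum_(k < n) poly_act u (p k) (e (f k))) /\
    (forall n (f : 'I_n -> I) (p : 'I_n -> {poly F}), injective f ->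
        \sum_(k < n) poly_act u (p k) (e (f k)) = 0 -> forall k, p k = 0).

Definition submodule (u : V -> V) (N : V -> Prop) : Prop :=
  [/\ N 0, (forall x y, N x -> N y -> N (x + y)),
      (forall (c : F) x, N x -> N (c *: x)) & (forall x, N x -> N (u x))].

Definition well_order (D : Type) (lt : D -> D -> Prop) : Prop :=
  [/\ (forall a, ~ lt a a), (forall a b c, lt a b -> lt b c -> lt a c),
      (forall a b, lt a b \/ a = b \/ lt b a) & well_founded lt].

Definition sum_sub (D : Type) (M : D -> V -> Prop) (P : D -> Prop) (y : V) : Prop :=
  exists n (f : 'I_n -> D) (z : 'I_n -> V),
    (forall k, P (f k)) /\ (forall k, M (f k) (z k)) /\ y = \sum_(k < n) z k.

Definition prev_sum (D : Type) (lt : D -> D -> Prop) (M : D -> V -> Prop) (a : D) :=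
  sum_sub M (fun b => lt b a).

Definition stratification (u : V -> V) (D : Type) (lt : D -> D -> Prop)
    (M : D -> V -> Prop) : Prop :=
  (exists x : V, x != 0) /\
  well_order lt /\
  (forall a, submodule u (M a)) /\
  (forall a b x, lt a b -> M a x -> M b x) /\
  (forall a, exists2 y, M a y & ~ prev_sum lt M a y) /\
  (forall a, exists2 x, M a x &
      forall y, M a y -> exists p : {poly F}, prev_sum lt M a (y - poly_act u p x)) /\
  (forall x : V, sum_sub M (fun _ => True) x).

(* dim (M_a / M_{<a}) >= 2 *)
Definition quot_dim_ge2 (D : Type) (lt : D -> D -> Prop) (M : D -> V -> Prop) (a : D) :=
  exists y1 y2, M a y1 /\ M a y2 /\
    forall c1 c2 : F, prev_sum lt M a (c1 *: y1 + c2 *: y2) -> c1 = 0 /\ c2 = 0.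

Definition is_succ (D : Type) (lt : D -> D -> Prop) (a b : D) :=
  lt a b /\ forall c, lt a c -> b = c \/ lt b c.

Definition PA (D : Type) (lt : D -> D -> Prop) (M : D -> V -> Prop) :=
  forall a b, is_succ lt a b -> quot_dim_ge2 lt M b.

Definition PM (D : Type) (lt : D -> D -> Prop) := forall a : D, exists b, lt a b.

End Defs.

From HB Require Import structures.
From mathcomp Require Import all_boot all_order all_algebra.
From Stdlib Require Import Classical ClassicalEpsilon ProofIrrelevance.
Set Implicit Arguments. Unset Strict Implicit. Unset Printing Implicit Defensive.
Import GRing.Theory.
Local Open Scope ring_scope.

(* Pick x_α generating M_α modulo M_{<α} and let n_α = dim (M_α / M_{<α}); the
   vectors u^k x_α with k < n_α form a basis of V.  Let v vanish on this basis,
   except that the last vector of each finite block goes to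
   a u^(n_α - 1) x_α - x_(α+1), where α+1 is the successor of α, which exists by
   (PM).  Since n_(α+1) >= 2 by (PA), v kills x_(α+1), whence v^2 = a v.  The map
   w = u - v sends every basis vector to the next one of its block, and the last
   vector of a finite block to x_(α+1) modulo M_α.  Hence the iterates w^i x_λ,
   for λ not the successor of a finite block, have pairwise distinct leading
   positions (α, k) in the lexicographic order and exhaust all of them, so
   V^(u - v) is free on these x_λ. *)

Section Subspaces.
Variables (R : pzRingType) (T : lmodType R).

Definition subspace (N : T -> Prop) :=
  [/\ N 0, forall x y, N x -> N y -> N (x + y) & forall (c : R) x, N x -> N (c *: x)].

Definition finsum (G : T -> Prop) (y : T) :=
  exists n (z : 'I_n -> T), (forall k, G (z k)) /\ y = \sum_(k < n) z k.

Section SubspaceTheory.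
Variables (N : T -> Prop) (subN : subspace N).

Lemma subspace0 : N 0. Proof. by case: subN. Qed.

Lemma subspaceD x y : N x -> N y -> N (x + y). Proof. by case: subN => _ + _; apply. Qed.

Lemma subspaceZ c x : N x -> N (c *: x). Proof. by case: subN => _ _; apply. Qed.

Lemma subspaceB x y : N x -> N y -> N (x - y).
Proof. by move=> Nx Ny; rewrite -scaleN1r; apply/subspaceD/subspaceZ. Qed.

Lemma subspace_sum (I : Type) (r : seq I) (P : pred I) (z : I -> T) :
  (forall i, P i -> N (z i)) -> N (\sum_(i <- r | P i) z i).
Proof. exact: (big_ind N subspace0 subspaceD). Qed.

End SubspaceTheory.

Lemma finsum_mem (G : T -> Prop) y : G y -> finsum G y.
Proof. by exists 1%N, (fun _ => y); rewrite big_ord1. Qed.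

Lemma finsum_ind (G S : T -> Prop) : S 0 -> (forall x y, S x -> S y -> S (x + y)) ->
  (forall z, G z -> S z) -> forall y, finsum G y -> S y.
Proof. by move=> S0 SD GS y [n [z [Gz ->]]]; apply: big_ind => // k _; apply: GS. Qed.

Lemma subspace_finsum (G N : T -> Prop) :
  subspace N -> (forall z, G z -> N z) -> forall y, finsum G y -> N y.
Proof. by move=> subN; apply: finsum_ind; [apply: subspace0 | apply: subspaceD]. Qed.

Lemma finsum_subspace (G : T -> Prop) :
  (forall c z, G z -> G (c *: z)) -> subspace (finsum G).
Proof.
move=> GZ; split.
- by exists 0%N, (fun _ => 0); split=> [[]|]; rewrite ?big_ord0.
- move=> _ _ [n1 [z1 [G1 ->]]] [n2 [z2 [G2 ->]]].
  exists (n1 + n2)%N, (fun k => match split k with inl i => z1 i | inr j => z2 j end).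
  split=> [k|]; first by case: (split k) => i; [apply: G1 | apply: G2].
  by rewrite big_split_ord; congr (_ + _); apply: eq_bigr => i _;
    rewrite ?(unsplitK (inl _ i)) ?(unsplitK (inr _ i)).
- move=> c _ [n [z [Gz ->]]]; exists n, (fun k => c *: z k).
  by split=> [k|]; [apply: GZ | rewrite scaler_sumr].
Qed.

Lemma finsum_sub (G G' : T -> Prop) :
  (forall c z, G' z -> G' (c *: z)) -> (forall z, G z -> G' z) ->
  forall y, finsum G y -> finsum G' y.
Proof.
by move=> G'Z GG'; apply: subspace_finsum (finsum_subspace G'Z) _ => z /GG' /finsum_mem.
Qed.

End Subspaces.

Lemma subspace_preim (R : pzRingType) (U T : lmodType R) (f : {linear U -> T}) (N : T -> Prop) :
  subspace N -> subspace (fun x => N (f x)).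
Proof.
move=> subN; split=> [|x y|c x]; rewrite ?linear0 ?linearD ?linearZ;
  [exact: subspace0 | exact: subspaceD | exact: subspaceZ].
Qed.

Lemma sval_inj (A : Type) (P : A -> Prop) : injective (@sval A P).
Proof. by move=> [x px] [y py] /= xy; apply: subset_eq_compat. Qed.

Lemma exists_seq_max (I : eqType) (L : Type) (r : L -> L -> Prop) (l : I -> L) (s : seq I) :
  (forall x y z, r x y -> r y z -> r x z) -> (forall x y, x <> y -> r x y \/ r y x) ->
  s != [::] -> exists2 t0, t0 \in s & forall t, t \in s -> l t = l t0 \/ r (l t) (l t0).
Proof.
move=> r_trans r_total; elim: s => // x s IHs _.
have [->|/IHs [t0 t0s t0max]] := eqVneq s [::].
  by exists x => [|t]; rewrite ?mem_seq1 ?inE // => /eqP ->; left.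
have [lxt0|/r_total [xt0|t0x]] := classic (l x = l t0).
- exists t0 => [|t]; rewrite inE ?t0s ?orbT // => /orP [/eqP ->|/t0max //]; by left.
- exists t0 => [|t]; rewrite inE ?t0s ?orbT // => /orP [/eqP ->|/t0max //]; by right.
- exists x => [|t]; rewrite inE ?eqxx // => /orP [/eqP ->|/t0max [->|]]; [by left|by right|].
  by right; apply: r_trans t0x.
Qed.

Lemma poly_act_widen (F : fieldType) (V : lmodType F) (g : V -> V) (p : {poly F}) x N :
  (size p <= N)%N -> poly_act g p x = \sum_(i < N) p`_i *: iter i g x.
Proof.
move=> le_pN; rewrite /poly_act (big_ord_widen N (fun i => p`_i *: iter i g x) le_pN).
rewrite big_mkcond; apply: eq_bigr => i _; case: ifPn => // /negbTE.
by rewrite ltnNge => /negbFE le_pi; rewrite nth_default ?scale0r.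
Qed.

Lemma poly_act_scaleXn (F : fieldType) (V : lmodType F) (g : V -> V) (c : F) k x :
  poly_act g (c *: 'X^k) x = c *: iter k g x.
Proof.
rewrite (@poly_act_widen _ _ _ _ _ k.+1); last first.
  by apply: leq_trans (size_scale_leq _ _) _; rewrite size_polyXn.
rewrite big_ord_recr /= big1 ?add0r; first by rewrite coefZ coefXn eqxx mulr1.
by move=> i _; rewrite coefZ coefXn ltn_eqF ?mulr0 ?scale0r.
Qed.

Lemma big_merge (R : pzRingType) (J : Type) n (f : 'I_n.+1 -> J) (c : 'I_n.+1 -> R) i j :
  i != j -> f i = f j ->
  exists c' : 'I_n -> R, forall (U : lmodType R) (g : J -> U),
    \sum_(k < n) c' k *: g (f (lift j k)) = \sum_(k < n.+1) c k *: g (f k).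
Proof.
rewrite eq_sym => nji fij; have [k0 def_i _] := unlift_some nji.
exists (fun k => c (lift j k) + (if k == k0 then c j else 0)) => U g.
rewrite (bigD1_ord j) //=; under eq_bigr do rewrite scalerDl.
rewrite big_split /= addrC; congr (_ + _).
rewrite (bigD1 k0) //= eqxx big1 ?addr0 -?def_i ?fij // => k /negbTE ->.
by rewrite scale0r.
Qed.

Section LinearExtension.
Variables (R : pzRingType) (V W : lmodType R) (J : Type) (b : J -> V) (y : J -> W).
Hypothesis b_span : forall x, finsum (fun z => exists j c, z = c *: b j) x.
Hypothesis b_free : forall n (f : 'I_n -> J) (c : 'I_n -> R), injective f ->
  \sum_(k < n) c k *: b (f k) = 0 -> forall k, c k = 0.

Lemma relation_transfer n (f : 'I_n -> J) (c : 'I_n -> R) :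
  \sum_(k < n) c k *: b (f k) = 0 -> \sum_(k < n) c k *: y (f k) = 0.
Proof.
elim: n f c => [|n IHn] f c; first by rewrite !big_ord0.
have [f_inj /(b_free f_inj) c0|f_ninj] := classic (injective f).
  by rewrite big1 // => k _; rewrite c0 scale0r.
have [i [j [nij fij]]] : exists i j, i != j /\ f i = f j.
  apply: NNPP => no_pair; apply: f_ninj => i j fij; apply/eqP; apply: NNPP => nij.
  by apply: no_pair; exists i, j; split => //; apply/negP.
have [c' Ec'] := big_merge c nij fij.
by rewrite -(Ec' _ b) -(Ec' _ y); apply: (IHn (fun k => f (lift j k))).
Qed.

Definition ext_graph := finsum (fun p : V * W => exists j c, p = (c *: b j, c *: y j)).

Lemma ext_graph_subspace : subspace ext_graph.
Proof. by apply: finsum_subspace => a _ [j [c ->]]; exists j, (a * c); rewrite -!scalerA. Qed.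

Lemma sum_pair n (p : 'I_n -> V * W) :
  \sum_(k < n) p k = (\sum_(k < n) (p k).1, \sum_(k < n) (p k).2).
Proof.
by rewrite [LHS]surjective_pairing; congr pair;
  [apply: (big_morph fst) | apply: (big_morph snd)].
Qed.

Lemma ext_graph_functional x z z' : ext_graph (x, z) -> ext_graph (x, z') -> z = z'.
Proof.
move=> gz gz'; have [n [p [Gp E]]] := subspaceB ext_graph_subspace gz gz'.
have [f /fin_all_exists [c pE]] := fin_all_exists Gp.
have [E1 E2] : x - x = \sum_(k < n) c k *: b (f k) /\ z - z' = \sum_(k < n) c k *: y (f k).
  by split; [move/(congr1 fst): E | move/(congr1 snd): E];
    rewrite sum_pair /= => ->; apply: eq_bigr => k _; rewrite pE.
by apply/subr0_eq; rewrite E2 relation_transfer // -E1 subrr.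
Qed.

Lemma ext_graph_total x : exists z, ext_graph (x, z).
Proof.
apply: (finsum_ind (S := fun x => exists z, ext_graph (x, z))) (b_span x).
- by exists 0; apply: (subspace0 ext_graph_subspace).
- by move=> x1 x2 [z1 g1] [z2 g2]; exists (z1 + z2); apply: (subspaceD ext_graph_subspace g1 g2).
- by move=> _ [j [c ->]]; exists (c *: y j); apply: finsum_mem; exists j, c.
Qed.

Lemma linear_extension : exists phi : {linear V -> W}, forall j, phi (b j) = y j.
Proof.
have [g gP] := choice _ ext_graph_total.
have g_lin (c : R) x1 x2 : g (c *: x1 + x2) = c *: g x1 + g x2.
  apply: ext_graph_functional (gP _) _.
  exact: (subspaceD ext_graph_subspace (subspaceZ ext_graph_subspace c (gP x1)) (gP x2)).
pose phi : {linear V -> W} := HB.pack g (GRing.isLinear.Build _ _ _ _ g g_lin).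
exists phi => j; apply: ext_graph_functional (gP _) _.
by apply: finsum_mem; exists j, 1; rewrite !scale1r.
Qed.

End LinearExtension.

Section Stratification.
Variables (F : fieldType) (V : lmodType F) (u : {linear V -> V}).
Variables (D : Type) (lt : D -> D -> Prop) (M : D -> V -> Prop).
Hypothesis strat : stratification u lt M.

Lemma lt_wo : well_order lt. Proof. by case: strat => _ []. Qed.
Lemma lt_irr α : ~ lt α α. Proof. by case: lt_wo. Qed.
Lemma lt_trans α β γ : lt α β -> lt β γ -> lt α γ.
Proof. by case: lt_wo => _ tr _ _; apply: tr. Qed.
Lemma lt_total α β : lt α β \/ α = β \/ lt β α. Proof. by case: lt_wo. Qed.
Lemma lt_wf : well_founded lt. Proof. by case: lt_wo. Qed.

Lemma M_submodule α : submodule u (M α).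
Proof. by case: strat => _ [_ [/(_ α)]]. Qed.

Lemma M_subspace α : subspace (M α).
Proof. by case: (M_submodule α). Qed.

Lemma M_u α x : M α x -> M α (u x).
Proof. by case: (M_submodule α) => _ _ _; apply. Qed.

Lemma M_iter α i x : M α x -> M α (iter i u x).
Proof. by move=> Mx; elim: i => //= i; apply: M_u. Qed.

Lemma M_mono α β x : lt α β -> M α x -> M β x.
Proof. by case: strat => _ [_ [_ [+ _]]]; apply. Qed.

Definition sum_of (P : D -> Prop) := finsum (fun z => exists β, P β /\ M β z).

Lemma sum_subE P y : sum_sub M P y <-> sum_of P y.
Proof.
split=> [[n [f [z [Pf [Mz ->]]]]]|[n [z [Gz ->]]]].
  by exists n, z; split=> // k; exists (f k).
have [f fP] := fin_all_exists Gz.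
by exists n, f, z; split=> [k|]; [case: (fP k) | split=> // k; case: (fP k)].
Qed.

Lemma sum_of_subspace P : subspace (sum_of P).
Proof.
apply: finsum_subspace => c z [β [Pβ Mz]]; exists β; split=> //.
exact: (subspaceZ (M_subspace β) c Mz).
Qed.

Lemma sum_of_mem (P : D -> Prop) β y : P β -> M β y -> sum_of P y.
Proof. by move=> Pβ My; apply: finsum_mem; exists β. Qed.

Lemma sum_of_u P y : sum_of P y -> sum_of P (u y).
Proof.
move: y; apply: (subspace_finsum (subspace_preim u (sum_of_subspace P))).
by move=> z [β [Pβ Mz]]; apply: sum_of_mem Pβ (M_u Mz).
Qed.

Lemma M_cover_all (S : V -> Prop) : subspace S -> (forall β y, M β y -> S y) -> forall x, S x.
Proof.
move=> subS MS x; have /sum_subE : sum_sub M (fun _ => True) x.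
  by case: strat => _ [_ [_ [_ [_ []]]]].
by apply: (subspace_finsum subS) => z [β [_ /MS]].
Qed.

Lemma sum_of_poly_act P p y : sum_of P y -> sum_of P (poly_act u p y).
Proof.
move=> Py; apply: (subspace_sum (sum_of_subspace P)) => i _.
apply: (subspaceZ (sum_of_subspace P)).
by elim: (nat_of_ord i) => //= k; apply: sum_of_u.
Qed.

Local Notation prev α := (sum_of (lt^~ α)).

Lemma prev_M α y : prev α y -> M α y.
Proof. by apply: (subspace_finsum (M_subspace α)) => z [β [/M_mono]]; apply. Qed.

Lemma generator_exists α : exists x, M α x /\
  forall y, M α y -> exists p : {poly F}, prev α (y - poly_act u p x).
Proof.
case: strat => _ [_ [_ [_ [_ [/(_ α) [x Mx xgen] _]]]]].
by exists x; split=> // y /xgen [p /sum_subE]; exists p.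
Qed.

Definition xgen α := proj1_sig (constructive_indefinite_description _ (generator_exists α)).

Lemma xgenP α : M α (xgen α) /\
  forall y, M α y -> exists p : {poly F}, prev α (y - poly_act u p (xgen α)).
Proof. exact: proj2_sig (constructive_indefinite_description _ (generator_exists α)). Qed.

Lemma M_xgen_iter α i : M α (iter i u (xgen α)).
Proof. by apply: M_iter; case: (xgenP α). Qed.

(* [below α d] is M_{<α} + span {u^i x_α | i < d}; thus [dim_gt α d] means
   d < n_α. *)
Definition below α d y := exists2 m, prev α m &
  exists c : nat -> F, y = m + \sum_(i < d) c i *: iter i u (xgen α).

Lemma below_subspace α d : subspace (below α d).
Proof.
split.
- exists 0; first exact: (subspace0 (sum_of_subspace _)).
  by exists (fun _ => 0); rewrite big1 ?addr0 // => i _; rewrite scale0r.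
- move=> _ _ [m1 P1 [c1 ->]] [m2 P2 [c2 ->]].
  exists (m1 + m2); first exact: (subspaceD (sum_of_subspace _) P1 P2).
  exists (fun i => c1 i + c2 i); rewrite addrACA -big_split /=.
  by congr (_ + _); apply: eq_bigr => i _; rewrite scalerDl.
- move=> c _ [m Pm [c1 ->]].
  exists (c *: m); first exact: (subspaceZ (sum_of_subspace _) _ Pm).
  exists (fun i => c * c1 i); rewrite scalerDr scaler_sumr.
  by congr (_ + _); apply: eq_bigr => i _; rewrite scalerA.
Qed.

Lemma prev_below α d y : prev α y -> below α d y.
Proof.
by exists y => //; exists (fun _ => 0); rewrite big1 ?addr0 // => i _; rewrite scale0r.
Qed.

Lemma below_iter α d i : (i < d)%N -> below α d (iter i u (xgen α)).
Proof.
move=> lt_id; exists 0; first exact: (subspace0 (sum_of_subspace _)).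
exists (fun k => (k == i)%:R); rewrite add0r (bigD1 (Ordinal lt_id)) //= eqxx scale1r.
by rewrite big1 ?addr0 // => k; rewrite -val_eqE /= => /negbTE ->; rewrite scale0r.
Qed.

Lemma below_min α d (S : V -> Prop) : subspace S -> (forall y, prev α y -> S y) ->
  (forall i, (i < d)%N -> S (iter i u (xgen α))) -> forall y, below α d y -> S y.
Proof.
move=> subS prevS iterS _ [m Pm [c ->]]; apply: subspaceD (prevS _ Pm) _ => //.
by apply: subspace_sum => // i _; apply: subspaceZ => //; apply: iterS.
Qed.

Lemma below_mono α d e y : (d <= e)%N -> below α d y -> below α e y.
Proof.
move=> le_de; apply: (below_min (below_subspace α e) (@prev_below α e)) => i lt_id.
exact: below_iter (leq_trans lt_id le_de).
Qed.

Lemma below_M α d y : below α d y -> M α y.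
Proof. by apply: (below_min (M_subspace α) (@prev_M α)) => i _; apply: M_xgen_iter. Qed.

Lemma belowS α d y : below α d.+1 y ->
  exists c y', below α d y' /\ y = y' + c *: iter d u (xgen α).
Proof.
move=> [m Pm [c ->]]; exists (c d), (m + \sum_(i < d) c i *: iter i u (xgen α)).
by split; [exists m => //; exists c | rewrite big_ord_recr /= addrA].
Qed.

Lemma M_below α y : M α y -> exists d, below α d y.
Proof.
move=> My; have [_ /(_ y My) [p Pp]] := xgenP α.
exists (size p); exists (y - poly_act u p (xgen α)) => //.
by exists (fun i => p`_i); rewrite subrK.
Qed.

Definition dim_gt α d := ~ below α d (iter d u (xgen α)).

Lemma dim_gt0 α : dim_gt α 0.
Proof.
move=> [m Pm [c]]; rewrite big_ord0 addr0 /= => xgenE.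
case: strat => _ [_ [_ [_ [/(_ α) [y My notprev] _]]]]; apply: notprev; apply/sum_subE.
have [_ /(_ y My) [p Pp]] := xgenP α.
rewrite -(subrK (poly_act u p (xgen α)) y); apply: (subspaceD (sum_of_subspace _) Pp).
by rewrite xgenE; apply: sum_of_poly_act.
Qed.

Lemma below_u α j y : ~ dim_gt α j -> below α j y -> below α j (u y).
Proof.
move=> /NNPP below_j; move: y.
apply: (below_min (subspace_preim u (below_subspace α j))) => [y /sum_of_u|i lt_ij].
  exact: prev_below.
rewrite /= -[u _]/(iter i.+1 u (xgen α)).
have [lt_i1j|le_ji1] := ltnP i.+1 j; first exact: below_iter.
by have -> : i.+1 = j by apply/eqP; rewrite eqn_leq lt_ij.
Qed.

Lemma below_dim_iter α j i : ~ dim_gt α j -> below α j (iter i u (xgen α)).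
Proof.
move=> not_gt; elim: i => [|i IHi]; last exact: below_u.
by case: j not_gt => [/NNPP //|j] _; apply: below_iter.
Qed.

Lemma dim_gt_le α d k : (k <= d)%N -> dim_gt α d -> dim_gt α k.
Proof.
move=> le_kd gt_d below_k; apply/gt_d/(below_mono le_kd)/below_dim_iter.
exact: (@^~ below_k).
Qed.

Lemma M_below_dim α j y : ~ dim_gt α j -> M α y -> below α j y.
Proof.
move=> not_gt /M_below [d]; apply: (below_min (below_subspace α j)) => [|i _].
  exact: prev_below.
exact: below_dim_iter.
Qed.

Definition lex (l l' : D * nat) := lt l.1 l'.1 \/ l.1 = l'.1 /\ (l.2 < l'.2)%N.

Lemma lex_trans l1 l2 l3 : lex l1 l2 -> lex l2 l3 -> lex l1 l3.
Proof.
case: l1 l2 l3 => [α1 d1] [α2 d2] [α3 d3]; rewrite /lex /=.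
move=> [lt12|[-> lt12]] [lt23|[<- lt23]]; try by left.
- exact: (or_introl (lt_trans lt12 lt23)).
- by right; split=> //; apply: ltn_trans lt12 lt23.
Qed.

Lemma lex_total l l' : l <> l' -> lex l l' \/ lex l' l.
Proof.
case: l l' => [α1 d1] [α2 d2] neq; rewrite /lex /=.
have [lt12|[eq12|lt21]] := lt_total α1 α2; [by left; left | subst | by right; left].
by case: (ltngtP d1 d2) => [lt_d|gt_d|eq_d]; [left; right | right; right | subst].
Qed.

Definition has_level y l := below l.1 l.2.+1 y /\ ~ below l.1 l.2 y.

Lemma below_lex l l' y : lex l l' -> below l.1 l.2.+1 y -> below l'.1 l'.2 y.
Proof.
case: l l' => [α d] [β e] [/= ltαβ|/= [<- lt_de]] bl; last exact: below_mono lt_de bl.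
by apply/prev_below/(sum_of_mem ltαβ)/(below_M bl).
Qed.

Lemma has_level_add l y z c :
  below l.1 l.2 z -> has_level y l -> c != 0 -> has_level (z + c *: y) l.
Proof.
move=> bz [by_hi by_lo] c0; split.
  exact: (subspaceD (below_subspace _ _) (below_mono (leqnSn _) bz)
    (subspaceZ (below_subspace _ _) _ by_hi)).
move=> bsum; apply: by_lo.
have -> : y = c^-1 *: ((z + c *: y) - z) by rewrite addrC addKr scalerA mulVf ?scale1r.
exact: (subspaceZ (below_subspace _ _) _ (subspaceB (below_subspace _ _) bsum bz)).
Qed.

Lemma levels_free (I : finType) (z : I -> V) (l : I -> D * nat) (c : I -> F) :
  injective l -> (forall t, has_level (z t) (l t)) ->
  \sum_t c t *: z t = 0 -> forall t, c t = 0.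
Proof.
move=> l_inj zl sum0 t; apply/eqP; apply: contraT => ct.
(* A nonzero coefficient at the largest level cannot be cancelled by the other
   terms, which all lie below that level. *)
set s := [seq t <- enum I | c t != 0].
have ts : t \in s by rewrite mem_filter ct mem_enum.
have s_nil : s != [::] by apply: contraTneq ts => ->.
have [t0 t0s t0max] := exists_seq_max l lex_trans lex_total s_nil.
have ct0 : c t0 != 0 by move: t0s; rewrite mem_filter => /andP [].
have rest_below : below (l t0).1 (l t0).2 (\sum_(t | t != t0) c t *: z t).
  apply: (subspace_sum (below_subspace _ _)) => t1 t1t0.
  have [->|ct1] := eqVneq (c t1) 0; first by rewrite scale0r; apply: subspace0 (below_subspace _ _).
  have t1s : t1 \in s by rewrite mem_filter ct1 mem_enum.
  have [/l_inj eq_t1|lex_t1] := t0max t1 t1s.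
    by rewrite eq_t1 eqxx in t1t0.
  exact: (subspaceZ (below_subspace _ _) _ (below_lex lex_t1 (zl t1).1)).
exfalso; case: (zl t0) => _; apply.
move: sum0; rewrite (bigD1 t0) //= => /eqP; rewrite addr_eq0 => /eqP ct0z.
have -> : z t0 = (c t0)^-1 *: (c t0 *: z t0) by rewrite scalerA mulVf ?scale1r.
by rewrite ct0z -scaleN1r; apply/(subspaceZ (below_subspace _ _))/(subspaceZ (below_subspace _ _)).
Qed.

Lemma M_ind (S : D -> V -> Prop) : (forall β, subspace (S β)) ->
  (forall β γ y, lt γ β -> S γ y -> S β y) ->
  (forall β, (forall y, prev β y -> S β y) -> forall i, S β (iter i u (xgen β))) ->
  forall β y, M β y -> S β y.
Proof.
move=> subS S_mono S_iter; elim/(well_founded_ind lt_wf) => β IHβ y /M_below [d].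
have S_prev y' : prev β y' -> S β y'.
  apply: (subspace_finsum (subS β)) => z [γ [ltγβ Mz]].
  exact: S_mono ltγβ (IHβ γ ltγβ z Mz).
by apply: (below_min (subS β) S_prev) => i _; apply: S_iter.
Qed.

Definition basis_index := {l : D * nat | dim_gt l.1 l.2}.

Definition bvec (j : basis_index) := iter (sval j).2 u (xgen (sval j).1).

Lemma bvec_level j : has_level (bvec j) (sval j).
Proof. by case: j => [[α d] gt_d]; split=> //; apply: below_iter. Qed.

Lemma bvec_free n (f : 'I_n -> basis_index) (c : 'I_n -> F) : injective f ->
  \sum_(k < n) c k *: bvec (f k) = 0 -> forall k, c k = 0.
Proof.
move=> f_inj; apply: (@levels_free _ (fun k => bvec (f k)) (fun k => sval (f k))).
  by move=> k1 k2 /sval_inj/f_inj.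
by move=> k; apply: bvec_level.
Qed.

Definition bspan (P : basis_index -> Prop) :=
  finsum (fun z => exists j c, P j /\ z = c *: bvec j).

Lemma bspan_subspace P : subspace (bspan P).
Proof.
by apply: finsum_subspace => a _ [j [c [Pj ->]]]; exists j, (a * c); rewrite scalerA.
Qed.

Lemma M_bspan β y : M β y -> bspan (fun j => lt (sval j).1 β \/ (sval j).1 = β) y.
Proof.
move: β y; apply: M_ind => [β|β γ y ltγβ|β prevS]; first exact: bspan_subspace.
  apply: (subspace_finsum (bspan_subspace _)) => _ [j [c [lej ->]]].
  apply: finsum_mem; exists j, c; split=> //; left.
  by case: lej => [ltj|->] //; apply: lt_trans ltj ltγβ.
elim/ltn_ind=> i IHi; have [gt_i|/NNPP below_i] := classic (dim_gt β i).
  by apply: finsum_mem; exists (exist _ (β, i) gt_i), 1; rewrite scale1r; split; [right|].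
by apply: (below_min (bspan_subspace _) prevS) below_i => k; apply: IHi.
Qed.

Lemma bvec_span x : finsum (fun z => exists j c, z = c *: bvec j) x.
Proof.
have bvec_scale a z : (exists j c, z = c *: bvec j) -> exists j c, a *: z = c *: bvec j.
  by move=> [j [c ->]]; exists j, (a * c); rewrite scalerA.
apply: M_cover_all => [|β y /M_bspan]; first exact: finsum_subspace.
by apply: finsum_sub => // _ [j [c [_ ->]]]; exists j, c.
Qed.

Hypothesis pm : PM lt.

Lemma succ_exists α : exists s, is_succ lt α s.
Proof.
have [β] := pm α; elim/(well_founded_ind lt_wf): β => β IHβ ltαβ.
have [[γ [ltγβ ltαγ]]|no_between] := classic (exists γ, lt γ β /\ lt α γ).
  exact: IHβ ltγβ ltαγ.
exists β; split=> // γ ltαγ; have [ltγβ|[->|ltβγ]] := lt_total γ β; [|by left|by right].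
by case: no_between; exists γ.
Qed.

Definition succ α := proj1_sig (constructive_indefinite_description _ (succ_exists α)).

Lemma succP α : is_succ lt α (succ α).
Proof. exact: proj2_sig (constructive_indefinite_description _ (succ_exists α)). Qed.

Lemma succ_lt α : lt α (succ α). Proof. by case: (succP α). Qed.

Lemma succ_min α β : lt α β -> succ α = β \/ lt (succ α) β.
Proof. by case: (succP α) => _; apply. Qed.

Lemma succ_inj : injective succ.
Proof.
suff succ_lt_neq α β : lt α β -> succ α <> succ β.
  move=> α β eq_s; have [/succ_lt_neq/(_ eq_s)[]|[//|/succ_lt_neq/(_ (esym eq_s))[]]] :=
    lt_total α β.
move=> ltαβ eq_s; have := succ_lt β; rewrite -eq_s.
have [<-|lt_sβ] := succ_min ltαβ; first exact: lt_irr.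
by move/(lt_trans lt_sβ); apply: lt_irr.
Qed.

Lemma prev_succ α y : M α y -> prev (succ α) y.
Proof. exact: sum_of_mem (succ_lt α). Qed.

Hypothesis pa : PA lt M.

Lemma dim_gt_succ1 α : dim_gt (succ α) 1.
Proof.
set s := succ α => below_1; have not_gt : ~ dim_gt s 1 by apply.
(* Otherwise the two vectors given by (PA) are multiples of x_s modulo M_{<s}. *)
have [y1 [y2 [My1 [My2 free12]]]] := pa (succP α).
have [m1 P1 [c1]] := M_below_dim not_gt My1; rewrite big_ord1 => y1E.
have [m2 P2 [c2]] := M_below_dim not_gt My2; rewrite big_ord1 => y2E.
have prev_free c c' : prev s (c *: y1 + c' *: y2) -> c = 0 /\ c' = 0.
  by move=> /sum_subE; apply: free12.
have : prev s (c2 0%N *: y1 + - c1 0%N *: y2).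
  have -> : c2 0%N *: y1 + - c1 0%N *: y2 = c2 0%N *: m1 - c1 0%N *: m2.
    by rewrite y1E y2E /= !scalerDr !scalerA mulNr mulrC !scaleNr addrACA subrr addr0.
  by apply: (subspaceB (sum_of_subspace _)); apply: (subspaceZ (sum_of_subspace _)).
move=> /prev_free [_ /eqP]; rewrite oppr_eq0 => /eqP c10.
suff /prev_free [/eqP] : prev s (1 *: y1 + 0 *: y2) by rewrite oner_eq0.
by rewrite scale0r addr0 scale1r y1E c10 scale0r addr0.
Qed.

Definition next (l : D * nat) :=
  if excluded_middle_informative (dim_gt l.1 l.2.+1) then (l.1, l.2.+1) else (succ l.1, 0%N).

Lemma below_next α d y : below α d.+1 y -> below (next (α, d)).1 (next (α, d)).2 y.
Proof.
rewrite /next /=; case: excluded_middle_informative => //= _ /below_M My.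
exact/prev_below/prev_succ.
Qed.

Lemma next_dim_gt l : dim_gt l.1 l.2 -> dim_gt (next l).1 (next l).2.
Proof. by rewrite /next; case: excluded_middle_informative => //= _ _; apply: dim_gt0. Qed.

Lemma next_inj l l' : dim_gt l.1 l.2 -> dim_gt l'.1 l'.2 -> next l = next l' -> l = l'.
Proof.
case: l l' => [α d] [β e] /= gt_d gt_e; rewrite /next /=.
case: excluded_middle_informative => gt_d1; case: excluded_middle_informative => gt_e1 //.
- by case=> -> ->.
- case=> /succ_inj eqαβ; subst β; case: (ltngtP d e) => [lt_de|lt_ed|-> //].
  + by case: gt_d1; apply: dim_gt_le lt_de gt_e.
  + by case: gt_e1; apply: dim_gt_le lt_ed gt_d.
Qed.

(* w maps the last vector of a finite block of β to x_(succ β) modulo M_β, so the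
   w-orbits start exactly at the x_λ with λ a chain head. *)
Definition chain_head λ := forall β d, dim_gt β d -> ~ dim_gt β d.+1 -> succ β <> λ.

Lemma next_not_head λ l : chain_head λ -> dim_gt l.1 l.2 -> next l <> (λ, 0%N).
Proof.
case: l => [α d] head /= gt_d; rewrite /next /=.
by case: excluded_middle_informative => //= not_gt [/(head _ _ gt_d not_gt)].
Qed.

Definition chain λ i := iter i next (λ, 0%N).

Lemma chain_dim_gt λ i : dim_gt (chain λ i).1 (chain λ i).2.
Proof. by elim: i => [|i IHi]; [apply: dim_gt0 | apply: next_dim_gt]. Qed.

Lemma chain_inj λ λ' i i' : chain_head λ -> chain_head λ' ->
  chain λ i = chain λ' i' -> i = i' /\ λ = λ'.
Proof.
move=> head head'; elim: i i' => [|i IHi] [|i'] //=.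
- by case.
- by move/esym/(next_not_head head (@chain_dim_gt _ _)).
- by move/(next_not_head head' (@chain_dim_gt _ _)).
- by move/(next_inj (@chain_dim_gt _ _) (@chain_dim_gt _ _))/IHi => [-> ->].
Qed.

Definition head := {λ : D | chain_head λ}.

Variable a : F.

Definition shift_target (j : basis_index) : V :=
  if excluded_middle_informative (dim_gt (sval j).1 (sval j).2.+1) then 0
  else a *: bvec j - xgen (succ (sval j).1).

Section Shift.
Variable v : {linear V -> V}.
Hypothesis v_bvec : forall j, v (bvec j) = shift_target j.

Lemma v_inner α k : dim_gt α k.+1 -> v (iter k u (xgen α)) = 0.
Proof.
move=> gt_k1; have := v_bvec (exist _ (α, k) (dim_gt_le (leqnSn k) gt_k1)).
by rewrite /shift_target /=; case: excluded_middle_informative.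
Qed.

Lemma v_last α k : dim_gt α k -> ~ dim_gt α k.+1 ->
  v (iter k u (xgen α)) = a *: iter k u (xgen α) - xgen (succ α).
Proof.
move=> gt_k not_gt; have := v_bvec (exist _ (α, k) gt_k).
by rewrite /shift_target /=; case: excluded_middle_informative.
Qed.

Lemma v_idem x : v (v x) = a *: v x.
Proof.
apply: (finsum_ind (S := fun x => v (v x) = a *: v x)) (bvec_span x).
- by rewrite !linear0.
- by move=> x1 x2 e1 e2; rewrite !linearD e1 e2.
move=> _ [[[α k] gt_k] [c ->]]; rewrite !linearZ /= /bvec /=.
congr (c *: _); have [gt_k1|not_gt] := classic (dim_gt α k.+1).
  by rewrite v_inner // linear0 scaler0.
rewrite v_last // linearB linearZ /= v_last //.
by rewrite -[xgen (succ α)]/(iter 0 u (xgen (succ α))) v_inner ?subr0 //; apply: dim_gt_succ1.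
Qed.

Local Notation w := (u \- v : {linear V -> V}).

Lemma w_inner α k : dim_gt α k.+1 -> w (iter k u (xgen α)) = iter k.+1 u (xgen α).
Proof. by move=> gt_k1; rewrite /= v_inner // subr0. Qed.

Lemma w_last α k : dim_gt α k -> ~ dim_gt α k.+1 ->
  w (iter k u (xgen α)) = iter k.+1 u (xgen α) - a *: iter k u (xgen α) + xgen (succ α).
Proof. by move=> gt_k not_gt; rewrite /= v_last // opprD opprK addrA. Qed.

Lemma v_M β α y : lt β α -> M β y -> below α 1 (v y).
Proof.
move=> ltβα /M_bspan; apply: (subspace_finsum (subspace_preim v (below_subspace α 1))).
move=> _ [j [c [lej ->]]]; rewrite linearZ; apply: (subspaceZ (below_subspace _ _)).
have ltjα : lt (sval j).1 α by case: lej => [ltj|->] //; apply: lt_trans ltj ltβα.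
rewrite v_bvec /shift_target; case: excluded_middle_informative => [gt_j1|not_gt_j1].
  exact: (subspace0 (below_subspace _ _)).
apply: (subspaceB (below_subspace _ _)).
  exact/prev_below/(subspaceZ (sum_of_subspace _))/(sum_of_mem ltjα)/M_xgen_iter.
have [<-|lt_sα] := succ_min ltjα; first exact: (below_iter _ (ltn0Sn 0)).
exact/prev_below/(sum_of_mem lt_sα)/(M_xgen_iter _ 0).
Qed.

Lemma w_prev α y : prev α y -> below α 1 (w y).
Proof.
move: y; apply: (subspace_finsum (subspace_preim w (below_subspace α 1))).
move=> z [β [ltβα Mz]] /=; apply: (subspaceB (below_subspace _ _)); last exact: v_M ltβα Mz.
exact/prev_below/(sum_of_mem ltβα)/M_u.
Qed.

Lemma w_below α d y : dim_gt α d -> below α d y ->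
  below (next (α, d)).1 (next (α, d)).2 (w y).
Proof.
move=> gt_d; move: y; apply: (below_min (subspace_preim w (below_subspace _ _))).
  by move=> y /w_prev/(below_mono (ltn0Sn d))/below_next.
move=> i lt_id; rewrite w_inner; last exact: dim_gt_le lt_id gt_d.
exact/below_next/below_iter.
Qed.

Lemma w_iter_level α d : dim_gt α d -> has_level (w (iter d u (xgen α))) (next (α, d)).
Proof.
move=> gt_d; rewrite /next; case: excluded_middle_informative => [gt_d1|not_gt].
  by rewrite w_inner //; split; [apply: below_iter|].
rewrite w_last //; set m := iter d.+1 u (xgen α) - a *: iter d u (xgen α).
have below_m : below (succ α) 0 m.
  apply/prev_below/prev_succ/(subspaceB (M_subspace α) (M_xgen_iter α d.+1)).
  exact: (subspaceZ (M_subspace α) a (M_xgen_iter α d)).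
split; first exact: (subspaceD (below_subspace _ _) (below_mono (leq0n 1) below_m)
                                (below_iter _ (ltn0Sn 0))).
move=> below_w; apply: (@dim_gt0 (succ α)); rewrite /= -(addKr m (xgen (succ α))) addrC.
exact: (subspaceB (below_subspace _ _) below_w below_m).
Qed.

Lemma w_level y l : has_level y l -> has_level (w y) (next l).
Proof.
case: l => [α d] [/belowS [c [y' [by' ->]]] not_below].
have c0 : c != 0 by apply/eqP => c0; apply: not_below; rewrite c0 scale0r addr0.
have gt_d : dim_gt α d.
  move=> below_d; apply: not_below.
  exact: (subspaceD (below_subspace _ _) by' (subspaceZ (below_subspace _ _) c below_d)).
by rewrite linearD linearZ; apply: has_level_add (w_below gt_d by') (w_iter_level gt_d) c0.
Qed.

Lemma chain_level λ i : has_level (iter i w (xgen λ)) (chain λ i).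
Proof.
elim: i => [|i IHi]; last exact: w_level.
by split; [apply: (below_iter _ (ltn0Sn 0)) | apply: dim_gt0].
Qed.

Lemma w_free n (f : 'I_n -> head) (p : 'I_n -> {poly F}) : injective f ->
  \sum_(k < n) poly_act w (p k) (xgen (sval (f k))) = 0 -> forall k, p k = 0.
Proof.
move=> f_inj; set N := \max_(k < n) size (p k).
have le_pN k : (size (p k) <= N)%N by apply: (leq_bigmax (F := fun k => size (p k))).
under eq_bigr => k _ do rewrite (poly_act_widen _ _ (le_pN k)).
rewrite pair_big /= => sum0.
have l_inj : injective (fun t : 'I_n * 'I_N => chain (sval (f t.1)) t.2).
  move=> [k1 i1] [k2 i2] /= /(chain_inj (svalP (f k1)) (svalP (f k2))) [ei ef].
  by congr pair; [apply/f_inj/sval_inj | apply: val_inj].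
have c0 := levels_free l_inj (fun t => chain_level _ t.2) sum0.
move=> k; apply/polyP => i; rewrite coef0; have [lt_iN|le_Ni] := ltnP i N.
  exact: (c0 (k, Ordinal lt_iN)).
exact/nth_default/(leq_trans (le_pN k) le_Ni).
Qed.

Definition wspan := finsum (fun z => exists (λ : head) k c, z = c *: iter k w (xgen (sval λ))).

Lemma wspan_subspace : subspace wspan.
Proof.
by apply: finsum_subspace => b _ [λ [k [c ->]]]; exists λ, k, (b * c); rewrite scalerA.
Qed.

Lemma wspan_w y : wspan y -> wspan (w y).
Proof.
move: y; apply: (subspace_finsum (subspace_preim w wspan_subspace)) => _ [λ [k [c ->]]].
by apply: finsum_mem; exists λ, k.+1, c; rewrite linearZ.
Qed.

Lemma wspan_xgen β : (forall y, prev β y -> wspan y) -> wspan (xgen β).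
Proof.
move=> prevS; have [head_β|] := classic (chain_head β).
  by apply: finsum_mem; exists (exist _ β head_β), 0%N, 1; rewrite scale1r.
move=> /not_all_ex_not [γ /not_all_ex_not [d /not_all_ex_not [gt_d]]].
move=> /not_all_ex_not [not_gt /NNPP succ_γ]; subst β.
have prev_iter i : prev (succ γ) (iter i u (xgen γ)) by apply/prev_succ/M_xgen_iter.
have -> : xgen (succ γ) =
    w (iter d u (xgen γ)) - (iter d.+1 u (xgen γ) - a *: iter d u (xgen γ)).
  by rewrite w_last // addrC addKr.
apply: (subspaceB wspan_subspace); first exact/wspan_w/prevS/prev_iter.
apply: (subspaceB wspan_subspace (prevS _ (prev_iter _))).
exact/(subspaceZ wspan_subspace)/prevS/prev_iter.
Qed.

Lemma M_wspan β y : M β y -> wspan y.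
Proof.
move: β y; apply: (M_ind (S := fun _ => wspan)) => [_|//|β prevS].
  exact: wspan_subspace.
elim/ltn_ind=> i IHi; have [gt_i|/NNPP below_i] := classic (dim_gt β i); last first.
  exact: (below_min wspan_subspace prevS) below_i.
case: i gt_i IHi => [_ _|k gt_k IHk]; first exact: wspan_xgen.
by rewrite -w_inner //; apply/wspan_w/IHk.
Qed.

Lemma w_span x : exists n (f : 'I_n -> head) (p : 'I_n -> {poly F}),
  x = \sum_(k < n) poly_act w (p k) (xgen (sval (f k))).
Proof.
have [n [z [zG ->]]] := M_cover_all wspan_subspace M_wspan x.
have [f /fin_all_exists [k /fin_all_exists [c zE]]] := fin_all_exists zG.
exists n, f, (fun i => c i *: 'X^(k i)).
by apply: eq_bigr => i _; rewrite poly_act_scaleXn zE.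
Qed.

Lemma shift_elementary : elementary (fun x => u x - v x).
Proof. by exists head, (fun λ => xgen (sval λ)); split; [apply: w_span | apply: w_free]. Qed.

End Shift.
End Stratification.

Theorem proposition3 (F : fieldType) (V : lmodType F) (u : {linear V -> V}) (a : F)
    (D : Type) (lt : D -> D -> Prop) (M : D -> V -> Prop) :
  stratification u lt M -> PA lt M -> PM lt ->
  exists v : {linear V -> V},
    (forall x, v (v x) = a *: v x) /\ elementary (fun x => u x - v x).
Proof.
move=> strat pa pm.
have [v v_bvec] :=
  linear_extension (shift_target pm a) (bvec_span strat) (bvec_free (strat := strat)).
by exists v; split; [apply: (v_idem pa v_bvec) | apply: (shift_elementary v_bvec)].
Qed.
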